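(* Let $\mathfrak{v}=\mathfrak{v}_{\bar 0}\oplus\mathfrak{v}_{\bar 1}$ be a finite-dimensional complex superspace, $\chi\in\mathfrak{v}_{\bar 0}^*$, and $\hat A$ the completion of $S[\mathfrak{v}]$ at $M_\chi$, with an even continuous Poisson bracket $\{\cdot,\cdot\}$. (i) If there are odd $f,g\in\hat AM_\chi$ with $\{f,g\}=1+t$ for some $t\in M_\chi$, then there exists an odd $h\in\hat A$ with $\{h,h\}=1$. (ii) For an odd $h\in\hat A$ with $\{h,h\}=1$, let $\hat B_1=\ker(\mathrm{ad}_h)$. Then $\phi:\bigwedge(\mathbb{C}h)\otimes\hat B_1\to\hat A$, $a\otimes b\mapsto ab$, is an isomorphism of Poisson algebras.
   Context: $M_\chi$ is the ideal generated by $x-\chi(x)$, $x\in\mathfrak{v}$ ($\chi$ extended by zero on $\mathfrak{v}_{\bar 1}$), $\hat A=\varprojlim S[\mathfrak{v}]/M_\chi^k$; $\mathrm{ad}_h=\{h,\cdot\}$. $\bigwedge(\mathbb{C}h)=\mathbb{C}\oplus\mathbb{C}h$ carries the Poisson bracket with $\{h,h\}=1$. *)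

From mathcomp Require Import all_boot all_algebra.
From mathcomp Require Import reals.
From mathcomp Require Export complex.
Set Implicit Arguments. Unset Strict Implicit. Unset Printing Implicit Defensive.
Import GRing.Theory.
Local Open Scope ring_scope.

(* Model of the completed supersymmetric algebra  Â = lim S[v]/M_chi^k.      *)
(* v = v_0 (+) v_1 with dim v_0 = m, dim v_1 = n; fix a homogeneous basis     *)
(* x_0..x_{m-1} of v_0 and theta_0..theta_{n-1} of v_1.  Put                  *)
(* y_i = x_i - chi(x_i).  Then Â = C[[y_0..y_{m-1}]] (x) /\(theta_0..),       *)
(* whose elements are arbitrary coefficient families indexed by monomials    *)
(* y^alpha theta_S (alpha a multi-index, S a subset of the odd indices,      *)
(* theta_S the product of the theta_j, j in S, in increasing order).         *)

Definition mon (m n : nat) := ({ffun 'I_m -> nat} * {set 'I_n})%type.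
Definition ser (K : Type) (m n : nat) := mon m n -> K.

Section Ops.
Variables (K : comRingType) (m n : nat).
Local Notation S := (ser K m n).

Definition szero : S := fun _ => 0.
Definition sadd (f g : S) : S := fun x => f x + g x.
Definition sopp (f : S) : S := fun x => - f x.
Definition sscale (c : K) (f : S) : S := fun x => c * f x.
Definition mon0 : mon m n := ([ffun => 0%N], set0).
Definition sone : S := fun x => if x == mon0 then 1 else 0.
Definition sconst (c : K) : S := sscale c sone.

(* sign of theta_T theta_U = wsign T U * theta_(T :|: U)  (T, U disjoint) *)
Definition wsign (T U : {set 'I_n}) : K :=
  (-1) ^+ #|[set p : 'I_n * 'I_n | [&& p.1 \in T, p.2 \in U & (p.2 < p.1)%N]]|.

(* Cauchy product of supercommutative formal power series *)
Definition smul (f g : S) : S := fun x =>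
  let a := x.1 in let U := x.2 in
  \sum_(b : {ffun 'I_m -> 'I_(\max_i a i).+1} | [forall i, (b i <= a i)%N])
   \sum_(T : {set 'I_n} | T \subset U)
     wsign T (U :\: T) * f ([ffun i => nat_of_ord (b i)], T)
       * g ([ffun i => (a i - b i)%N], U :\: T).

Definition yvar (i : 'I_m) : S :=
  fun x => if x == ([ffun j => nat_of_bool (j == i)], set0) then 1 else 0.
Definition thvar (j : 'I_n) : S :=
  fun x => if x == ([ffun => 0%N], [set j]) then 1 else 0.

Definition xel (chi : 'I_m -> K) (i : 'I_m) : S := sadd (sconst (chi i)) (yvar i).

(* f lies in the ideal Â M_chi generated by the x - chi(x), x in v
   (chi extended by zero on v_1, so the odd generators are the theta_j). *)
Definition in_AM (chi : 'I_m -> K) (f : S) : Prop :=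
  exists (a : 'I_m -> S) (b : 'I_n -> S),
    f = fun x => \sum_i smul (a i) (sadd (xel chi i) (sconst (- chi i))) x
               + \sum_j smul (b j) (thvar j) x.

Definition homog (p : bool) (f : S) : Prop :=
  forall x : mon m n, f x != 0 -> odd #|x.2| = p.
Definition is_odd (f : S) := homog true f.

Definition spar (f : S) : S := fun x => if odd #|x.2| then - f x else f x.

Definition ssign (b : bool) : K := (-1) ^+ b.

(* f in (Â M_chi)^k = closure of M_chi^k : all coefficients of total degree < k vanish *)
Definition ord_ge (k : nat) (f : S) : Prop :=
  forall x : mon m n, (\sum_i x.1 i + #|x.2| < k)%N -> f x = 0.

Record is_poisson (br : S -> S -> S) : Prop := {
  br_addl : forall f g k, br (sadd f g) k = sadd (br f k) (br g k);
  br_addr : forall f g k, br f (sadd g k) = sadd (br f g) (br f k);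
  br_scalel : forall c f g, br (sscale c f) g = sscale c (br f g);
  br_scaler : forall c f g, br f (sscale c g) = sscale c (br f g);
  br_even : forall p q f g, homog p f -> homog q g -> homog (p (+) q) (br f g);
  br_skew : forall p q f g, homog p f -> homog q g ->
      br f g = sscale (- ssign (p && q)) (br g f);
  br_jacobi : forall p q f g k, homog p f -> homog q g ->
      br f (br g k) = sadd (br (br f g) k) (sscale (ssign (p && q)) (br g (br f k)));
  br_leibniz : forall p q f g k, homog p f -> homog q g ->
      br f (smul g k) = sadd (smul (br f g) k) (sscale (ssign (p && q)) (smul g (br f k)))
}.

Definition br_continuous (br : S -> S -> S) : Prop :=
  forall f g (k : nat), exists l : nat, forall u v, ord_ge l u -> ord_ge l v ->
    ord_ge k (sadd (br (sadd f u) (sadd g v)) (sopp (br f g))).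

(* The Poisson superalgebra  /\(C h) (x) B1  (h odd, {h,h} = 1).            *)
(* Every element is uniquely  1(x)b0 + h(x)b1 ; we represent it by (b0,b1).  *)
(* With the usual super tensor product rules                                 *)
(*   (a(x)b)(a'(x)b') = (-1)^{|b||a'|} aa'(x)bb',                            *)
(*   {a(x)b,a'(x)b'} = (-1)^{|b||a'|}({a,a'}(x)bb' + aa'(x){b,b'})           *)
(* and h^2 = 0, {h,h} = 1, {1,-} = 0, these unfold to the formulas below     *)
(* (spar implements the sign (-1)^{|b|}).                                    *)
Definition tmul (P Q : S * S) : S * S :=
  (smul P.1 Q.1, sadd (smul (spar P.1) Q.2) (smul P.2 Q.1)).
Definition tbr (br : S -> S -> S) (P Q : S * S) : S * S :=
  (sadd (br P.1 Q.1) (smul (spar P.2) Q.2), sadd (br (spar P.1) Q.2) (br P.2 Q.1)).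
Definition phi (h : S) (P : S * S) : S := sadd P.1 (smul h P.2).

Definition inB1 (br : S -> S -> S) (h : S) (b : S) : Prop := br h b = szero.

Definition phi_poisson_iso (br : S -> S -> S) (h : S) : Prop :=
  let B1 := inB1 br h in
  [/\
      (forall P Q, B1 P.1 -> B1 P.2 -> B1 Q.1 -> B1 Q.2 -> phi h P = phi h Q -> P = Q),
      (forall f, exists P, [/\ B1 P.1, B1 P.2 & phi h P = f]),
      (forall c P Q, B1 P.1 -> B1 P.2 -> B1 Q.1 -> B1 Q.2 ->
         phi h (sadd (sscale c P.1) Q.1, sadd (sscale c P.2) Q.2)
         = sadd (sscale c (phi h P)) (phi h Q)),
      phi h (sone, szero) = sone /\
      (forall P Q, B1 P.1 -> B1 P.2 -> B1 Q.1 -> B1 Q.2 ->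
         phi h (tmul P Q) = smul (phi h P) (phi h Q)) &
      (forall P Q, B1 P.1 -> B1 P.2 -> B1 Q.1 -> B1 Q.2 ->
         phi h (tbr br P Q) = br (phi h P) (phi h Q))].

End Ops.

(* (ii) For odd h with {h,h} = 1 the Jacobi identity gives ad_h^2 = ad_{h,h}/2 = 0, and the
   Leibniz rule gives {h, h b} = b for b in B1 = ker ad_h.  Hence every f is uniquely
   b0 + h b1 with b1 = {h,f} and b0 = f - h {h,f} in B1, and products and brackets, expanded
   using h h = 0, f h = h par(f) and {b,h} = 0 for b in B1, are those of /\(C h) (x) B1.
   (i) The constant term of {f,g} is 1, so for h one of f, g, f + g the even element
   c = {h,h} has an invertible constant term.  Jacobi gives 3 {h,c} = 0.  Power series with
   invertible constant term have inverses and square roots (computed coefficientwise by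
   recursion on the degree), so there is an even w with w w c = 1; the derivation {h,-}
   kills c, hence w, and H = h w satisfies {H,H} = w w c = 1. *)

From mathcomp Require Import all_boot all_algebra.
From mathcomp Require Import reals complex.
From mathcomp Require Import ring zify.
From mathcomp Require boolp.
Set Implicit Arguments. Unset Strict Implicit. Unset Printing Implicit Defensive.
Import GRing.Theory.
Local Open Scope ring_scope.

Section Reindex.
Variables (K : nmodType) (I J : finType) (X Y : Type).
Variables (eI : I -> X) (dI : X -> I) (eJ : J -> Y) (dJ : Y -> J).

Lemma reindex_coded (P : pred X) (Q : pred Y) (h : X -> Y) (h' : Y -> X) (F : Y -> K) :
  cancel eI dI -> {in P, cancel dI eI} -> cancel eJ dJ -> {in Q, cancel dJ eJ} ->
  {in P, forall x, Q (h x) /\ h' (h x) = x} -> {in Q, forall y, P (h' y) /\ h (h' y) = y} ->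
  \sum_(i | P (eI i)) F (h (eI i)) = \sum_(j | Q (eJ j)) F (eJ j).
Proof.
move=> eIK dIK eJK dJK hP hQ.
rewrite [RHS](reindex_onto (fun i => dJ (h (eI i))) (fun j => dI (h' (eJ j)))); last first.
  move=> j Qj; have [Ph' hh'] := hQ _ Qj.
  by rewrite dIK // hh' eJK.
apply: eq_big => [i|i Pi]; last by have [Qh _] := hP _ Pi; rewrite dJK.
apply/idP/andP => [Pi|[Qi /eqP ei]]; last by rewrite -ei dIK //; have [] := hQ _ Qi.
have [Qh h'h] := hP _ Pi.
by rewrite dJK // h'h eIK.
Qed.

End Reindex.

Section MultiIndex.
Variable m : nat.
Local Notation ffn := {ffun 'I_m -> nat}.
Implicit Types (a u v w : ffn).

Definition fleq u v := [forall i, u i <= v i]%N.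
Definition fsubn u v : ffn := [ffun i => u i - v i]%N.
Definition faddn u v : ffn := [ffun i => u i + v i]%N.
Definition fbounded N : pred ffn := fun u => [forall i, u i <= N]%N.

Definition ffnat N (b : {ffun 'I_m -> 'I_N.+1}) : ffn := [ffun i => val (b i)].
Definition ffinord N u : {ffun 'I_m -> 'I_N.+1} := [ffun i => inord (u i)].

Lemma fleqP u v : reflect (forall i, u i <= v i)%N (fleq u v).
Proof. exact: forallP. Qed.

Lemma fboundedP N u : reflect (forall i, u i <= N)%N (fbounded N u).
Proof. exact: forallP. Qed.

Lemma fleq_bounded N u v : fleq u v -> fbounded N v -> fbounded N u.
Proof. by move=> /fleqP uv /fboundedP vN; apply/fboundedP => i; apply: leq_trans (vN i). Qed.

Lemma fbounded_max a : fbounded (\max_i a i) a.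
Proof. by apply/fboundedP => i; apply: leq_bigmax. Qed.

Lemma ffnatK N : cancel (@ffnat N) (@ffinord N).
Proof. by move=> b; apply/ffunP => i; apply/val_inj; rewrite !ffunE inord_val. Qed.

Lemma ffinordK N : {in fbounded N, cancel (@ffinord N) (@ffnat N)}.
Proof. by move=> u /fboundedP uN; apply/ffunP => i; rewrite !ffunE /= inordK // ltnS. Qed.

Lemma fleq_refl a : fleq a a.
Proof. exact/fleqP. Qed.

Lemma fleq0 a : fleq [ffun => 0%N] a.
Proof. by apply/fleqP => i; rewrite ffunE. Qed.

Lemma fleq_subn a v : fleq (fsubn a v) a.
Proof. by apply/fleqP => i; rewrite ffunE leq_subr. Qed.

Lemma fsubn0 a : fsubn a [ffun => 0%N] = a.
Proof. by apply/ffunP => i; rewrite !ffunE subn0. Qed.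

Lemma fsubnn a : fsubn a a = [ffun => 0%N].
Proof. by apply/ffunP => i; rewrite !ffunE subnn. Qed.

Lemma fsubnK a v : fleq v a -> fsubn a (fsubn a v) = v.
Proof. by move=> /fleqP va; apply/ffunP => i; rewrite !ffunE subKn. Qed.

Lemma fsubn_split a v u : fleq u v -> fleq v a -> fsubn a v = fsubn (fsubn a u) (fsubn v u).
Proof.
move=> /fleqP uv /fleqP va; apply/ffunP => i.
by move: (uv i) (va i); rewrite !ffunE; lia.
Qed.

End MultiIndex.

Section BoxSum.
Variables (K : nmodType) (m : nat).
Local Notation ffn := {ffun 'I_m -> nat}.
Implicit Types (a u v w : ffn).

(* The sum over the multi-indices v <= a, encoded by 'I_N.+1-valued ffuns as in smul; any
   bound N >= a gives the same sum (boxsumE). *)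
Definition boxsum a (F : ffn -> K) : K :=
  \sum_(b : {ffun 'I_m -> 'I_(\max_i a i).+1} | fleq (ffnat b) a) F (ffnat b).

Lemma ffinordK_fleq N a :
  fbounded N a -> {in (fun v => fleq v a), cancel (@ffinord m N) (@ffnat m N)}.
Proof. by move=> aN v va; apply: ffinordK; apply: fleq_bounded va aN. Qed.

Lemma boxsumE N a F : fbounded N a ->
  boxsum a F = \sum_(b : {ffun 'I_m -> 'I_N.+1} | fleq (ffnat b) a) F (ffnat b).
Proof.
move=> aN; apply: (reindex_coded (P := fun v => fleq v a) (Q := fun v => fleq v a)
                                 (h := id) (h' := id)) => //.
- exact: ffnatK.
- exact/ffinordK_fleq/fbounded_max.
- exact: ffnatK.
- exact: ffinordK_fleq.
Qed.

Lemma eq_boxsum a F G : (forall v, fleq v a -> F v = G v) -> boxsum a F = boxsum a G.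
Proof. by move=> FG; apply: eq_bigr => b; apply: FG. Qed.

Lemma boxsum1 a v F : fleq v a -> (forall u, fleq u a -> u != v -> F u = 0) ->
  boxsum a F = F v.
Proof.
move=> va F0; rewrite /boxsum (bigD1 (ffinord _ v)) /=; last first.
  by rewrite (ffinordK_fleq (fbounded_max a)).
rewrite (ffinordK_fleq (fbounded_max a)) // big1 ?addr0 // => b /andP [ba nb].
by apply: F0 => //; apply: contra nb => /eqP <-; rewrite ffnatK.
Qed.

Lemma boxsum_rev a (G : ffn -> ffn -> K) :
  boxsum a (fun v => G v (fsubn a v)) = boxsum a (fun v => G (fsubn a v) v).
Proof.
pose F w := G (fsubn a w) w.
transitivity (\sum_(b : {ffun 'I_m -> 'I_(\max_i a i).+1} | fleq (ffnat b) a)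
                F (fsubn a (ffnat b))).
  by apply: eq_bigr => b ba; rewrite /F fsubnK.
apply: (reindex_coded (P := fun v => fleq v a) (Q := fun v => fleq v a)
                      (h := fsubn a) (h' := fsubn a)).
- exact: ffnatK.
- exact/ffinordK_fleq/fbounded_max.
- exact: ffnatK.
- exact/ffinordK_fleq/fbounded_max.
- by move=> v va; rewrite fleq_subn (fsubnK va).
- by move=> v va; rewrite fleq_subn (fsubnK va).
Qed.

Lemma boxsum_split a (G : ffn -> ffn -> ffn -> K) :
  boxsum a (fun v => boxsum v (fun u => G u (fsubn v u) (fsubn a v))) =
  boxsum a (fun u => boxsum (fsubn a u) (fun w => G u w (fsubn (fsubn a u) w))).
Proof.
set N := (\max_i a i)%N; have aN : fbounded N a := fbounded_max a.
pose box := {ffun 'I_m -> 'I_N.+1}.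
pose F (y : ffn * ffn) := G y.1 y.2 (fsubn (fsubn a y.1) y.2).
transitivity (\sum_(b : box | fleq (ffnat b) a) \sum_(c : box | fleq (ffnat c) (ffnat b))
   F (ffnat c, fsubn (ffnat b) (ffnat c))).
  apply: eq_bigr => b ba; rewrite (boxsumE _ (fleq_bounded ba aN)).
  apply: eq_bigr => c cb; congr G.
  by rewrite /= (fsubn_split cb ba).
transitivity (\sum_(b : box | fleq (ffnat b) a)
                \sum_(c : box | fleq (ffnat c) (fsubn a (ffnat b))) F (ffnat b, ffnat c)).
  2: by apply: eq_bigr => b _; rewrite (boxsumE _ (fleq_bounded (fleq_subn a (ffnat b)) aN)).
rewrite !pair_big_dep.
pose code (p : box * box) := (ffnat p.1, ffnat p.2).
pose decode (x : ffn * ffn) : box * box := (ffinord N x.1, ffinord N x.2).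
have codeK : cancel code decode by move=> [b c]; rewrite /code /decode !ffnatK.
apply: (reindex_coded (eI := code) (dI := decode) (eJ := code) (dJ := decode)
  (P := fun x => fleq x.1 a && fleq x.2 x.1)
  (Q := fun y => fleq y.1 a && fleq y.2 (fsubn a y.1))
  (h := fun x => (x.2, fsubn x.1 x.2)) (h' := fun y => (faddn y.1 y.2, y.1))) => //.
- move=> [v u] /andP [va uv]; have vN := fleq_bounded va aN.
  have uN := fleq_bounded uv vN.
  by rewrite /code /decode /= !ffinordK.
- move=> [u w] /andP [ua wau]; have uN := fleq_bounded ua aN.
  have wN := fleq_bounded wau (fleq_bounded (fleq_subn a u) aN).
  by rewrite /code /decode /= !ffinordK.
- move=> [v u] /andP [/fleqP va /fleqP uv] /=; split.
    by apply/andP; split; apply/fleqP => i; move: (va i) (uv i); rewrite /= ?ffunE; lia.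
  by congr pair; apply/ffunP => i; move: (uv i); rewrite /= ?ffunE; lia.
- move=> [u w] /andP [/fleqP ua /fleqP wau] /=; split.
    by apply/andP; split; apply/fleqP => i; move: (ua i) (wau i); rewrite /= ?ffunE; lia.
  by congr pair; apply/ffunP => i; rewrite /= ?ffunE; lia.
Qed.

End BoxSum.

Section SubsetSum.
Variables (K : nmodType) (n : nat).
Implicit Types (A B T U : {set 'I_n}).

Lemma setDDK A U : A \subset U -> U :\: (U :\: A) = A.
Proof. by move=> AU; rewrite setDDr setDv set0U (setIidPr AU). Qed.

Lemma setUDK A U : A \subset U -> A :|: (U :\: A) = U.
Proof. by move=> AU; rewrite -{2}(setID U A) (setIidPr AU). Qed.

Lemma disjoint_setD A U : [disjoint A & U :\: A].
Proof. by rewrite disjoint_sym; have /subsetDP [] := subxx (U :\: A). Qed.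

Lemma subsetsum_rev U (H : {set 'I_n} -> {set 'I_n} -> K) :
  \sum_(T : {set 'I_n} | T \subset U) H T (U :\: T) =
  \sum_(T : {set 'I_n} | T \subset U) H (U :\: T) T.
Proof.
transitivity (\sum_(T : {set 'I_n} | T \subset U) (fun A => H (U :\: A) A) (U :\: T)).
  by apply: eq_bigr => T TU; rewrite setDDK.
apply: (@reindex_coded _ _ _ _ _ id id id id (fun T => T \subset U) (fun T => T \subset U)
  (setD U) (setD U) (fun A => H (U :\: A) A)) => //.
- by move=> T TU; rewrite subsetDl setDDK.
- by move=> T TU; rewrite subsetDl setDDK.
Qed.

Lemma subsetsum_split U (H : {set 'I_n} -> {set 'I_n} -> {set 'I_n} -> K) :
  \sum_(T : {set 'I_n} | T \subset U) \sum_(A : {set 'I_n} | A \subset T)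
     H A (T :\: A) (U :\: T) =
  \sum_(A : {set 'I_n} | A \subset U) \sum_(B : {set 'I_n} | B \subset U :\: A)
     H A B (U :\: A :\: B).
Proof.
rewrite !pair_big_dep.
transitivity (\sum_(p : {set 'I_n} * {set 'I_n} | (p.1 \subset U) && (p.2 \subset p.1))
   (fun q => H q.1 q.2 (U :\: q.1 :\: q.2)) (p.2, p.1 :\: p.2)).
  by apply: eq_bigr => -[T A] /= /andP [_ AT]; rewrite setDDl setUDK.
apply: (@reindex_coded _ _ _ _ _ id id id id
  (fun p : {set 'I_n} * {set 'I_n} => (p.1 \subset U) && (p.2 \subset p.1))
  (fun q : {set 'I_n} * {set 'I_n} => (q.1 \subset U) && (q.2 \subset U :\: q.1))
  (fun p => (p.2, p.1 :\: p.2)) (fun q => (q.1 :|: q.2, q.1))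
  (fun q => H q.1 q.2 (U :\: q.1 :\: q.2))) => //.
- move=> [T A] /andP [/= TU AT]; rewrite setUDK // (subset_trans AT TU).
  by rewrite setSD.
- move=> [A B] /andP [/= AU BUA]; rewrite subsetUl andbT subUset AU.
  have /subsetDP [_ dBA] := BUA.
  by rewrite (subset_trans BUA (subsetDl U A)) setDUl setDv set0U (setDidPl dBA).
Qed.

End SubsetSum.

Section Sign.
Variables (K : comNzRingType) (n : nat).
Implicit Types (A B C : {set 'I_n}).
Local Notation sg := (@wsign K n).

Definition inv_pairs A B :=
  [set p : 'I_n * 'I_n | [&& p.1 \in A, p.2 \in B & (p.2 < p.1)%N]].

Lemma wsignE A B : sg A B = (-1) ^+ #|inv_pairs A B|.
Proof. by []. Qed.

Lemma wsign0l B : sg set0 B = 1.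
Proof.
by rewrite wsignE (_ : inv_pairs _ _ = set0) ?cards0 //; apply/setP => p; rewrite !inE.
Qed.

Lemma wsign0r A : sg A set0 = 1.
Proof.
by rewrite wsignE (_ : inv_pairs _ _ = set0) ?cards0 //; apply/setP => p; rewrite !inE andbF.
Qed.

Lemma wsign_sqr A B : sg A B * sg A B = 1.
Proof. by rewrite wsignE -exprMn mulrNN mulr1 expr1n. Qed.

Lemma wsignUl A B C : [disjoint A & B] -> sg (A :|: B) C = sg A C * sg B C.
Proof.
move=> dAB; rewrite !wsignE -exprD.
have -> : inv_pairs (A :|: B) C = inv_pairs A C :|: inv_pairs B C.
  by apply/setP => p; rewrite !inE andb_orl.
rewrite cardsU (_ : _ :&: _ = set0) ?cards0 ?subn0 //; apply/setP => p; rewrite !inE.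
case: (boolP (p.1 \in A)) => //= pA; case: (boolP (p.1 \in B)) => //= pB; rewrite ?andbF //.
by move: dAB; rewrite disjoints_subset => /subsetP /(_ _ pA); rewrite inE pB.
Qed.

Lemma wsignUr A B C : [disjoint B & C] -> sg A (B :|: C) = sg A B * sg A C.
Proof.
move=> dBC; rewrite !wsignE -exprD.
have -> : inv_pairs A (B :|: C) = inv_pairs A B :|: inv_pairs A C.
  by apply/setP => p; rewrite !inE; case: (p.1 \in A); rewrite //= andb_orl.
rewrite cardsU (_ : _ :&: _ = set0) ?cards0 ?subn0 //; apply/setP => p; rewrite !inE.
case: (boolP (p.2 \in B)) => pB; case: (boolP (p.2 \in C)) => pC; rewrite ?andbF //=.
by move: dBC; rewrite disjoints_subset => /subsetP /(_ _ pB); rewrite inE pC.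
Qed.

Lemma wsign_cocycle A B C : [disjoint A & B] -> [disjoint B & C] ->
  sg (A :|: B) C * sg A B = sg A (B :|: C) * sg B C.
Proof. by move=> dAB dBC; rewrite wsignUl // wsignUr // mulrC !mulrA. Qed.

(* (x, y) in A x B is an inversion of (A, B) if y < x, and (y, x) is one of (B, A) if x < y. *)
Lemma wsignC A B : [disjoint A & B] -> sg A B * sg B A = (-1) ^+ (#|A| * #|B|).
Proof.
move=> dAB; rewrite !wsignE -exprD -cardsX.
pose swap (p : 'I_n * 'I_n) := (p.2, p.1).
have swapK : involutive swap by case.
rewrite -[#|inv_pairs B A|](card_imset _ (inv_inj swapK)).
have disj : inv_pairs A B :&: swap @: inv_pairs B A = set0.
  apply/setP => -[x y]; rewrite !inE; apply/negP => /andP [/and3P [_ _ yx]].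
  case/imsetP => -[u v]; rewrite !inE => /and3P [_ _ vu] [ex ey].
  by move: yx; rewrite ex ey => /(ltn_trans vu); rewrite ltnn.
rewrite -cardsUI disj cards0 addn0; congr (_ ^+ _); apply: eq_card => -[x y]; rewrite !inE /=.
apply/idP/idP.
  case/orP => [/and3P [-> -> //]|/imsetP [[u v]]].
  by rewrite !inE /= => /and3P [vB uA _] [-> ->]; rewrite uA vB.
move=> /andP [xA yB]; case: (ltngtP x y) => xy.
- by apply/orP; right; apply/imsetP; exists (y, x); rewrite // !inE xA yB xy.
- by rewrite xA yB.
- move: yB; rewrite -(val_inj xy) => xB.
  by move: dAB; rewrite disjoints_subset => /subsetP /(_ _ xA); rewrite inE xB.
Qed.

End Sign.

Section Product.
Variables (K : comNzRingType) (m n : nat).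
Local Notation S := (ser K m n).
Local Notation ffn := {ffun 'I_m -> nat}.
Local Notation sg := (@wsign K n).
Local Notation zero := (@szero K m n).
Local Notation one := (@sone K m n).
Implicit Types (f g k : S) (a v : ffn) (U T : {set 'I_n}).

Lemma smulE f g a U : smul f g (a, U) =
  boxsum a (fun v => \sum_(T : {set 'I_n} | T \subset U)
                       sg T (U :\: T) * f (v, T) * g (fsubn a v, U :\: T)).
Proof.
apply: eq_big => [b|b _]; first by apply: eq_forallb => i; rewrite ffunE.
by apply: eq_bigr => T _; congr (_ * _ * g (_, _)); apply/ffunP => i; rewrite !ffunE.
Qed.

Lemma smulEr f g a U : smul f g (a, U) =
  boxsum a (fun v => \sum_(T : {set 'I_n} | T \subset U)
                       sg (U :\: T) T * f (fsubn a v, U :\: T) * g (v, T)).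
Proof.
rewrite smulE (boxsum_rev a (fun v w => \sum_(T : {set 'I_n} | T \subset U)
   sg T (U :\: T) * f (v, T) * g (w, U :\: T))).
apply: eq_boxsum => v _.
exact: (subsetsum_rev U (fun A B => sg A B * f (fsubn a v, A) * g (v, B))).
Qed.

Lemma eq_smul_below f f' g g' a U :
  (forall v T, fleq v a -> T \subset U -> f (v, T) = f' (v, T) /\ g (v, T) = g' (v, T)) ->
  smul f g (a, U) = smul f' g' (a, U).
Proof.
move=> ff'gg'; rewrite !smulE; apply: eq_boxsum => v va; apply: eq_bigr => T TU.
have [-> _] := ff'gg' _ _ va TU.
by have [_ ->] := ff'gg' _ _ (fleq_subn a v) (subsetDl U T).
Qed.

Lemma smulDl f f' g : smul (sadd f f') g = sadd (smul f g) (smul f' g).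
Proof.
apply: boolp.funext => -[a U]; rewrite /sadd !smulE /boxsum -big_split.
by apply: eq_bigr => b _; rewrite -big_split; apply: eq_bigr => T _; rewrite mulrDr mulrDl.
Qed.

Lemma smulDr f g g' : smul f (sadd g g') = sadd (smul f g) (smul f g').
Proof.
apply: boolp.funext => -[a U]; rewrite /sadd !smulE /boxsum -big_split.
by apply: eq_bigr => b _; rewrite -big_split; apply: eq_bigr => T _; rewrite mulrDr.
Qed.

Lemma smulZl c f g : smul (sscale c f) g = sscale c (smul f g).
Proof.
apply: boolp.funext => -[a U]; rewrite /sscale !smulE /boxsum mulr_sumr.
by apply: eq_bigr => b _; rewrite mulr_sumr; apply: eq_bigr => T _; rewrite !mulrA [_ * c]mulrC.
Qed.

Lemma smulZr c f g : smul f (sscale c g) = sscale c (smul f g).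
Proof.
apply: boolp.funext => -[a U]; rewrite /sscale !smulE /boxsum mulr_sumr.
by apply: eq_bigr => b _; rewrite mulr_sumr; apply: eq_bigr => T _; rewrite mulrCA mulrA.
Qed.

Lemma smul0l g : smul zero g = zero.
Proof.
apply: boolp.funext => -[a U]; rewrite smulE /boxsum big1 // => b _.
by rewrite big1 // => T _; rewrite mulr0 mul0r.
Qed.

Lemma smul0r f : smul f zero = zero.
Proof.
apply: boolp.funext => -[a U]; rewrite smulE /boxsum big1 // => b _.
by rewrite big1 // => T _; rewrite mulr0.
Qed.

Definition sdelta (y : mon m n) : S := fun x => if x == y then 1 else 0.

Lemma sone_delta : one = sdelta (mon0 m n).
Proof. by []. Qed.

Lemma smul_deltal u A g a U : smul (sdelta (u, A)) g (a, U) =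
  if fleq u a && (A \subset U) then sg A (U :\: A) * g (fsubn a u, U :\: A) else 0.
Proof.
have d0 v T : (v != u) || (T != A) -> sdelta (u, A) (v, T) = 0.
  by rewrite /sdelta xpair_eqE -negb_and => /negbTE ->.
rewrite smulE; case: ifP => [/andP [ua AU]|uaAU]; last first.
  rewrite /boxsum big1 // => b ba; rewrite big1 // => T TU; rewrite d0 ?mulr0 ?mul0r //.
  by apply: contraFT uaAU; rewrite negb_or !negbK => /andP [/eqP <- /eqP <-]; rewrite ba.
rewrite (boxsum1 ua) => [|v _ vu]; last by rewrite big1 // => T _; rewrite d0 ?vu ?mulr0 ?mul0r.
rewrite (bigD1 A) //= big1 ?addr0 => [|T /andP [_ TA]]; last by rewrite d0 ?TA ?orbT ?mulr0 ?mul0r.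
by rewrite /sdelta eqxx mulr1.
Qed.

Lemma smul_deltar u A f a U : smul f (sdelta (u, A)) (a, U) =
  if fleq u a && (A \subset U) then sg (U :\: A) A * f (fsubn a u, U :\: A) else 0.
Proof.
have d0 v T : (v != u) || (T != A) -> sdelta (u, A) (v, T) = 0.
  by rewrite /sdelta xpair_eqE -negb_and => /negbTE ->.
rewrite smulEr; case: ifP => [/andP [ua AU]|uaAU]; last first.
  rewrite /boxsum big1 // => b ba; rewrite big1 // => T TU; rewrite d0 ?mulr0 //.
  by apply: contraFT uaAU; rewrite negb_or !negbK => /andP [/eqP <- /eqP <-]; rewrite ba.
rewrite (boxsum1 ua) => [|v _ vu]; last by rewrite big1 // => T _; rewrite d0 ?vu ?mulr0.
rewrite (bigD1 A) //= big1 ?addr0 => [|T /andP [_ TA]]; last by rewrite d0 ?TA ?orbT ?mulr0.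
by rewrite /sdelta eqxx mulr1.
Qed.

Lemma smul1l g : smul one g = g.
Proof.
apply: boolp.funext => -[a U].
by rewrite sone_delta smul_deltal fleq0 sub0set wsign0l fsubn0 setD0 mul1r.
Qed.

Lemma smul1r f : smul f one = f.
Proof.
apply: boolp.funext => -[a U].
by rewrite sone_delta smul_deltar fleq0 sub0set wsign0r fsubn0 setD0 mul1r.
Qed.

Lemma smul_delta_diagl g x : smul (sdelta x) g x = g (mon0 m n).
Proof. by case: x => a U; rewrite smul_deltal fleq_refl subxx setDv wsign0r fsubnn mul1r. Qed.

Lemma smul_delta_diagr f x : smul f (sdelta x) x = f (mon0 m n).
Proof. by case: x => a U; rewrite smul_deltar fleq_refl subxx setDv wsign0l fsubnn mul1r. Qed.

(* Both sides are the sum over the splittings x = u + w + z of the coefficient of x, and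
   the signs agree by the cocycle identity. *)
Lemma smulA f g k : smul (smul f g) k = smul f (smul g k).
Proof.
apply: boolp.funext => -[a U].
pose H u w z A B C := sg (A :|: B) C * sg A B * (f (u, A) * g (w, B) * k (z, C)).
pose Phi u w z := \sum_(T : {set 'I_n} | T \subset U) \sum_(A : {set 'I_n} | A \subset T)
  H u w z A (T :\: A) (U :\: T).
transitivity (boxsum a (fun v => boxsum v (fun u => Phi u (fsubn v u) (fsubn a v)))).
  rewrite smulE; apply: eq_boxsum => v _.
  rewrite /Phi /boxsum exchange_big /=; apply: eq_bigr => T TU.
  rewrite smulE /boxsum mulr_sumr mulr_suml; apply: eq_bigr => b _.
  rewrite mulr_sumr mulr_suml; apply: eq_bigr => A AT.
  by rewrite /H setUDK // !mulrA.
rewrite (boxsum_split a Phi) smulE; apply: eq_boxsum => u _.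
transitivity (boxsum (fsubn a u) (fun w =>
  \sum_(A : {set 'I_n} | A \subset U) \sum_(B : {set 'I_n} | B \subset U :\: A)
    H u w (fsubn (fsubn a u) w) A B (U :\: A :\: B))).
  by apply: eq_boxsum => w _; rewrite /Phi subsetsum_split.
rewrite /boxsum exchange_big; apply: eq_bigr => A AU.
rewrite smulE /boxsum mulr_sumr; apply: eq_bigr => c _.
rewrite mulr_sumr; apply: eq_bigr => B BUA.
have /subsetDP [_ dBA] := BUA; have dAB : [disjoint A & B] by rewrite disjoint_sym.
rewrite /H (wsign_cocycle K dAB (disjoint_setD B (U :\: A))) (setUDK BUA).
by rewrite !mulrA; congr (_ * _); rewrite -!mulrA; congr (_ * _); rewrite mulrCA.
Qed.

Lemma smul_homog p q f g : homog p f -> homog q g -> homog (p (+) q) (smul f g).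
Proof.
move=> fp gq [a U] /= nz; apply/eqP; apply: contraNT nz => pqU; apply/eqP.
rewrite smulE /boxsum big1 // => b _; rewrite big1 // => T TU.
have [->|/fp /= fT] := eqVneq (f (ffnat b, T)) 0; first by rewrite mulr0 mul0r.
have [->|/gq /= gT] := eqVneq (g (fsubn a (ffnat b), U :\: T)) 0; first by rewrite mulr0.
by move: pqU; rewrite -fT -gT -(cardsID T U) (setIidPr TU) oddD eqxx.
Qed.

Lemma smulC p q f g : homog p f -> homog q g ->
  smul f g = sscale (ssign K (p && q)) (smul g f).
Proof.
move=> fp gq; apply: boolp.funext => -[a U]; rewrite /sscale smulE smulEr /boxsum mulr_sumr.
apply: eq_bigr => b _; rewrite mulr_sumr; apply: eq_bigr => T TU.
have [f0|/fp /= fT] := eqVneq (f (ffnat b, T)) 0; first by rewrite f0 !(mulr0, mul0r).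
have [g0|/gq /= gT] := eqVneq (g (fsubn a (ffnat b), U :\: T)) 0.
  by rewrite g0 !(mulr0, mul0r).
have sgTU : sg T (U :\: T) = ssign K (p && q) * sg (U :\: T) T.
  rewrite -[LHS]mulr1 -(wsign_sqr K (U :\: T) T) mulrA wsignC ?disjoint_setD //.
  by rewrite /ssign -signr_odd oddM fT gT.
by rewrite sgTU -!mulrA [f _ * _]mulrC.
Qed.

Lemma smul_mon0 f g : smul f g (mon0 m n) = f (mon0 m n) * g (mon0 m n).
Proof.
rewrite /mon0 smulE (boxsum1 (fleq0 _)) => [|v /fleqP v0 /eqP []]; last first.
  by apply/ffunP => i; move: (v0 i); rewrite !ffunE leqn0 => /eqP.
rewrite (big_pred1 set0) => [|T]; last by rewrite subset0.
by rewrite wsign0l set0D fsubnn mul1r.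
Qed.

End Product.

Section Recursion.
Variables (K : fieldType) (m n : nat).
Local Notation S := (ser K m n).
Local Notation ffn := {ffun 'I_m -> nat}.
Local Notation zero := (@szero K m n).
Local Notation one := (@sone K m n).
Local Notation mon0 := (mon0 m n).
Implicit Types (f g : S) (x y : mon m n) (T U : {set 'I_n}).

Definition mdeg x : nat := (\sum_i x.1 i + #|x.2|)%N.

Lemma mdeg_lt (v a : ffn) T U : fleq v a -> T \subset U -> (v, T) != (a, U) ->
  (mdeg (v, T) < mdeg (a, U))%N.
Proof.
move=> /fleqP va TU; rewrite /mdeg /=.
case: (eqVneq v a) => [<- vTvU|nva _].
  rewrite ltn_add2l proper_card // properEneq TU andbT.
  by apply: contraNneq vTvU => ->.
have [i vai] : exists i, (v i < a i)%N.
  have /existsP [i nvai] : [exists i, v i != a i].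
    by rewrite -negb_forall; apply: contra nva => /forallP vai; apply/eqP/ffunP => i; apply/eqP/vai.
  by exists i; rewrite ltn_neqAle nvai va.
rewrite -addSn leq_add ?subset_leq_card // (bigD1 i) //= [X in (_ < X)%N](bigD1 i) //=.
by rewrite -addSn leq_add // leq_sum.
Qed.

Definition causal (Phi : S -> mon m n -> K) :=
  forall f g x, (forall y, (mdeg y < mdeg x)%N -> f y = g y) -> Phi f x = Phi g x.

(* The k-th iterate of Phi from 0 is already final in degrees < k. *)
Lemma causal_fixpoint Phi : causal Phi -> exists w : S, forall x, w x = Phi w x.
Proof.
move=> Phi_causal; pose approx k : S := iter k Phi zero.
have approx_stable k k' y : (k <= k')%N -> (mdeg y < k)%N -> approx k y = approx k' y.
  elim: k k' y => [//|k IHk] [//|k'] y kk' yk /=.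
  by apply: Phi_causal => z zy; apply: IHk => //; apply: leq_trans zy _.
exists (fun x => approx (mdeg x).+1 x) => x /=.
by apply: Phi_causal => y yx; symmetry; exact: (approx_stable _ _ _ yx (ltnSn _)).
Qed.

Definition sdrop (P : pred (mon m n)) f : S := fun y => if P y then 0 else f y.

Lemma sdrop_causal (P : pred (mon m n)) f g a U : P (a, U) ->
  (forall y, (mdeg y < mdeg (a, U))%N -> f y = g y) ->
  forall v T, fleq v a -> T \subset U -> sdrop P f (v, T) = sdrop P g (v, T).
Proof.
move=> PaU fg v T va TU; rewrite /sdrop; case: ifPn => // PvT.
by apply: fg; apply: mdeg_lt => //; apply: contraNneq PvT => ->.
Qed.

Lemma sdrop1_split x f : f = sadd (sdrop (pred1 x) f) (sscale (f x) (sdelta K x)).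
Proof.
apply: boolp.funext => y; rewrite /sadd /sdrop /sscale /sdelta /=.
by case: eqP => [->|]; rewrite ?mulr1 ?mulr0 ?add0r ?addr0.
Qed.

(* For x != 0, (c v)(x) = c(0) v(x) + terms involving only lower-degree coefficients of v. *)
Lemma exists_smul_inv (c : S) : c mon0 != 0 -> exists v, smul c v = one.
Proof.
move=> c0; pose Phi v x := if x == mon0 then (c mon0)^-1
                           else - smul c (sdrop (pred1 x) v) x / c mon0.
have Phi_causal : causal Phi.
  move=> f g [a U] fg; rewrite /Phi; case: ifP => // _; congr (- _ / _).
  have PaU : pred1 (a, U) (a, U) := eqxx _.
  by apply: eq_smul_below => v T va TU; split; last exact: (sdrop_causal PaU fg).
have [v vE] := causal_fixpoint Phi_causal.
exists v; apply: boolp.funext => x; rewrite /sone.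
have [->|x0] := eqVneq x mon0; first by rewrite smul_mon0 vE /Phi eqxx mulfV.
rewrite {1}(sdrop1_split x v) smulDr smulZr /sadd /sscale smul_delta_diagr.
by rewrite [v x]vE /Phi (negbTE x0) divfK // addrN.
Qed.

(* For x != 0, (w w)(x) = 2 w(0) w(x) + terms involving only lower-degree coefficients of w. *)
Lemma exists_smul_sqrt (e : S) (r : K) : r * r = e mon0 -> r != 0 -> 2%:R != 0 :> K ->
  exists w, smul w w = e.
Proof.
move=> re r0 K2; pose P x : pred (mon m n) := fun y => (y == x) || (y == mon0).
pose Phi w x := if x == mon0 then r
                else (e x - smul (sdrop (P x) w) (sdrop (P x) w) x) / (2%:R * r).
have Phi_causal : causal Phi.
  move=> f g [a U] fg; rewrite /Phi; case: ifP => // _; congr ((_ - _) / _).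
  have PaU : P (a, U) (a, U) by apply/orP; left.
  by apply: eq_smul_below => v T va TU; split; exact: (sdrop_causal PaU fg).
have [w wE] := causal_fixpoint Phi_causal.
have w0 : w mon0 = r by rewrite wE /Phi eqxx.
exists w; apply: boolp.funext => x.
have [->|x0] := eqVneq x mon0; first by rewrite smul_mon0 w0.
have w_split : w = sadd (sdrop (P x) w)
                   (sadd (sscale r (sdelta K mon0)) (sscale (w x) (sdelta K x))).
  apply: boolp.funext => y; rewrite /sadd /sdrop /sscale /sdelta /P /=.
  case: (eqVneq y x) => [->|yx]; first by rewrite (negbTE x0) mulr0 mulr1 !add0r.
  case: (eqVneq y mon0) => [->|y0]; first by rewrite w0 mulr0 mulr1 add0r addr0.
  by rewrite !mulr0 !addr0.
have dx : sdrop (P x) w x = 0 by rewrite /sdrop /P (_ : x == x).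
have d0 : sdrop (P x) w mon0 = 0 by rewrite /sdrop /P (_ : mon0 == mon0) ?orbT.
have one_x : one x = 0 by rewrite /sone (negbTE x0).
have deltax0 : sdelta K x mon0 = 0 by rewrite /sdelta eq_sym (negbTE x0).
have deltaxx : sdelta K x x = 1 by rewrite /sdelta (_ : x == x).
rewrite [in LHS]w_split !smulDl !smulDr !smulZl !smulZr -sone_delta !smul1l !smul1r.
rewrite /sadd /sscale !smul_delta_diagl !smul_delta_diagr dx d0 one_x deltax0 deltaxx.
rewrite [w x]wE /Phi (negbTE x0).
by field; rewrite r0 K2.
Qed.

End Recursion.

Section Parity.
Variables (K : comNzRingType) (m n : nat).
Local Notation S := (ser K m n).
Local Notation zero := (@szero K m n).
Local Notation one := (@sone K m n).
Implicit Types (f g h u v : S) (x : mon m n).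

Lemma sadd0r f : sadd f zero = f.
Proof. by apply: boolp.funext => x; rewrite /sadd addr0. Qed.

Lemma sadd0l f : sadd zero f = f.
Proof. by apply: boolp.funext => x; rewrite /sadd add0r. Qed.

Lemma saddA f g h : sadd f (sadd g h) = sadd (sadd f g) h.
Proof. by apply: boolp.funext => x; rewrite /sadd addrA. Qed.

Lemma saddC f g : sadd f g = sadd g f.
Proof. by apply: boolp.funext => x; rewrite /sadd addrC. Qed.

Lemma sscale1 f : sscale 1 f = f.
Proof. by apply: boolp.funext => x; rewrite /sscale mul1r. Qed.

Lemma sscaler0 c : sscale c zero = zero.
Proof. by apply: boolp.funext => x; rewrite /sscale mulr0. Qed.

Lemma sscaleA c d f : sscale c (sscale d f) = sscale (c * d) f.
Proof. by apply: boolp.funext => x; rewrite /sscale mulrA. Qed.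

Lemma soppE f : sopp f = sscale (-1) f.
Proof. by apply: boolp.funext => x; rewrite /sscale mulN1r. Qed.

Lemma ssignF : ssign K false = 1. Proof. exact: expr0. Qed.
Lemma ssignT : ssign K true = -1. Proof. exact: expr1. Qed.

Definition seven f : S := fun x => if odd #|x.2| then 0 else f x.
Definition sodd f : S := fun x => if odd #|x.2| then f x else 0.

Lemma seven_add_sodd f : sadd (seven f) (sodd f) = f.
Proof.
by apply: boolp.funext => x; rewrite /sadd /seven /sodd; case: ifP; rewrite ?add0r ?addr0.
Qed.

Lemma homog_seven f : homog false (seven f).
Proof. by move=> x; rewrite /seven; case: ifP => //; rewrite eqxx. Qed.

Lemma homog_sodd f : homog true (sodd f).
Proof. by move=> x; rewrite /sodd; case: ifP => //; rewrite eqxx. Qed.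

Lemma homog_eq0 p f x : homog p f -> odd #|x.2| != p -> f x = 0.
Proof. by move=> fp; apply: contraNeq => /fp ->. Qed.

Lemma homog0 p : homog p zero.
Proof. by move=> x; rewrite eqxx. Qed.

Lemma homog1 : homog false one.
Proof.
by move=> x; rewrite /sone; case: (eqVneq x (mon0 m n)) => [-> _|]; rewrite ?cards0 ?eqxx.
Qed.

Lemma homogD p f g : homog p f -> homog p g -> homog p (sadd f g).
Proof.
move=> fp gp x; rewrite /sadd; apply: contraNeq => px.
by rewrite (homog_eq0 fp px) (homog_eq0 gp px) addr0.
Qed.

Lemma seven_add u v : homog false u -> homog true v -> seven (sadd u v) = u.
Proof.
move=> u0 v1; apply: boolp.funext => x; rewrite /seven /sadd.
case: (boolP (odd #|x.2|)) => px; first by rewrite (homog_eq0 u0) ?px.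
by rewrite (homog_eq0 v1) ?addr0 // (negbTE px).
Qed.

Lemma sodd_add u v : homog false u -> homog true v -> sodd (sadd u v) = v.
Proof.
move=> u0 v1; apply: boolp.funext => x; rewrite /sodd /sadd.
case: (boolP (odd #|x.2|)) => px; first by rewrite (homog_eq0 u0) ?add0r ?px.
by rewrite (homog_eq0 v1) // (negbTE px).
Qed.

Lemma seven_id f : homog false f -> seven f = f.
Proof. by move=> f0; rewrite -[f in seven f]sadd0r seven_add //; apply: homog0. Qed.

Lemma homog_add_eq0 u v : homog false u -> homog true v -> sadd u v = zero ->
  u = zero /\ v = zero.
Proof.
move=> u0 v1 uv0; split; [rewrite -(seven_add u0 v1) | rewrite -(sodd_add u0 v1)].
  by rewrite uv0; apply: boolp.funext => x; rewrite /seven; case: ifP.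
by rewrite uv0; apply: boolp.funext => x; rewrite /sodd; case: ifP.
Qed.

Lemma spar_homog p f : homog p f -> spar f = sscale (ssign K p) f.
Proof.
move=> fp; apply: boolp.funext => x; rewrite /spar /sscale /ssign.
have [<-|px] := eqVneq (odd #|x.2|) p; first by case: ifP; rewrite ?mulN1r ?mul1r.
by rewrite (homog_eq0 fp px) mulr0; case: ifP; rewrite ?oppr0.
Qed.

Lemma spar_add f g : spar (sadd f g) = sadd (spar f) (spar g).
Proof. by apply: boolp.funext => x; rewrite /spar /sadd; case: ifP; rewrite ?opprD. Qed.

Lemma spar_seven_sodd f : spar f = sadd (seven f) (sopp (sodd f)).
Proof.
apply: boolp.funext => x; rewrite /spar /sadd /sopp /seven /sodd.
by case: ifP; rewrite ?oppr0 ?add0r ?addr0.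
Qed.

Lemma smul_odd_comm h f : homog true h -> smul f h = smul h (spar f).
Proof.
move=> h1; rewrite -{1}(seven_add_sodd f) smulDl (smulC (homog_seven (f := f)) h1).
rewrite (smulC (homog_sodd (f := f)) h1) spar_seven_sodd smulDr soppE smulZr.
by rewrite ssignF ssignT sscale1.
Qed.

End Parity.

Section NoTwoTorsion.
Variables (K : idomainType) (m n : nat).
Local Notation S := (ser K m n).
Local Notation zero := (@szero K m n).
Implicit Types (f h w : S).
Hypothesis K2 : 2%:R != 0 :> K.

Lemma selfopp_eq0 (x : K) : x = - x -> x = 0.
Proof.
move=> xN; have : x * 2%:R == 0 by rewrite mulr_natr mulr2n {2}xN addrN.
by rewrite mulf_eq0 (negbTE K2) orbF => /eqP.
Qed.

Lemma sadd_self_eq0 f : sadd f f = zero -> f = zero.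
Proof.
move=> ff0; apply: boolp.funext => x; rewrite /szero; apply: selfopp_eq0; apply/eqP.
by rewrite -addr_eq0; apply/eqP; exact: (congr1 (fun F => F x) ff0).
Qed.

Lemma smul_odd_self h : homog true h -> smul h h = zero.
Proof.
move=> h1; apply: boolp.funext => x; apply: selfopp_eq0.
by rewrite {1}(smulC h1 h1) ssignT /sscale mulN1r.
Qed.

Lemma seven_smul_self w : seven (smul w w) = smul (seven w) (seven w).
Proof.
have w0 := homog_seven (f := w); have w1 := homog_sodd (f := w).
rewrite -{1 2}(seven_add_sodd w) !smulDl !smulDr (smul_odd_self w1) sadd0r -saddA.
rewrite seven_add //; first exact: (smul_homog w0 w0).
by apply: homogD; [exact: (smul_homog w0 w1) | exact: (smul_homog w1 w0)].
Qed.

End NoTwoTorsion.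

Section Bracket.
Variables (K : idomainType) (m n : nat).
Local Notation S := (ser K m n).
Local Notation zero := (@szero K m n).
Local Notation one := (@sone K m n).
Implicit Types (f g h k : S).
Variable br : S -> S -> S.
Hypothesis Hbr : is_poisson br.
Hypothesis K2 : 2%:R != 0 :> K.

Definition sadd_closed (P : S -> Prop) := forall f g, P f -> P g -> P (sadd f g).

Lemma homog_ind (P : S -> Prop) : sadd_closed P -> (forall p f, homog p f -> P f) ->
  forall f, P f.
Proof.
move=> PD Ph f; rewrite -(seven_add_sodd f).
by apply: PD; [apply: Ph (homog_seven (f := f)) | apply: Ph (homog_sodd (f := f))].
Qed.

Lemma inB1_seven_sodd h f : homog true h -> inB1 br h f ->
  inB1 br h (seven f) /\ inB1 br h (sodd f).
Proof.
move=> h1 hf.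
have parts0 : sadd (br h (sodd f)) (br h (seven f)) = zero.
  by rewrite saddC -(br_addr Hbr) seven_add_sodd.
have [odd0 even0] := homog_add_eq0 (br_even Hbr h1 (homog_sodd (f := f)))
                                   (br_even Hbr h1 (homog_seven (f := f))) parts0.
by [].
Qed.

Lemma inB1_ind h (P : S -> Prop) : homog true h -> sadd_closed P ->
  (forall p f, homog p f -> inB1 br h f -> P f) -> forall f, inB1 br h f -> P f.
Proof.
move=> h1 PD Ph f hf; have [hf0 hf1] := inB1_seven_sodd h1 hf.
by rewrite -(seven_add_sodd f); apply: PD; [apply: Ph hf0 | apply: Ph hf1];
  [exact: homog_seven | exact: homog_sodd].
Qed.

Lemma br1r f : br f one = zero.
Proof.
elim/homog_ind: f => [f g fz gz|p f fp]; first by rewrite (br_addl Hbr) fz gz sadd0r.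
have := br_leibniz Hbr one fp (@homog1 K m n); rewrite !smul1l smul1r andbF ssignF sscale1.
move=> E; apply: boolp.funext => x; have Ex := congr1 (fun F => F x) E; rewrite /sadd /= in Ex.
by apply: (@addrI _ (br f one x)); rewrite /szero addr0 -Ex.
Qed.

Lemma br1l g : br one g = zero.
Proof.
elim/homog_ind: g => [f g fz gz|p g gp]; first by rewrite (br_addr Hbr) fz gz sadd0r.
by rewrite (br_skew Hbr (@homog1 K m n) gp) br1r sscaler0.
Qed.

Lemma br_odd_even_mul h f g : homog true h -> homog false f ->
  br h (smul f g) = sadd (smul (br h f) g) (smul f (br h g)).
Proof. by move=> h1 f0; rewrite (br_leibniz Hbr _ h1 f0) ssignF sscale1. Qed.

Section OddElement.
Variable h : S.
Hypothesis h1 : homog true h.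

Lemma br_B1_hmul f g : inB1 br h f -> br f (smul h g) = smul h (br (spar f) g).
Proof.
move: f; apply: (inB1_ind h1) => [f f' IHf IHf' | p f fp hf].
  by rewrite (br_addl Hbr) IHf IHf' spar_add (br_addl Hbr) smulDr.
rewrite (br_leibniz Hbr _ fp h1) (br_skew Hbr fp h1) hf sscaler0 smul0l sadd0l.
by rewrite (spar_homog fp) (br_scalel Hbr) smulZr andbT.
Qed.

Lemma br_hmul_B1 f g : inB1 br h g -> br (smul h f) g = smul h (br f g).
Proof.
move: g; apply: (inB1_ind h1) => [g g' IHg IHg' | q g gq hg].
  by rewrite (br_addr Hbr) IHg IHg' (br_addr Hbr) smulDr.
elim/homog_ind: f => [f f' IHf IHf' | p f fp].
  by rewrite smulDr (br_addl Hbr) IHf IHf' (br_addl Hbr) smulDr.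
have hf := smul_homog h1 fp.
rewrite (br_skew Hbr hf gq) (br_leibniz Hbr _ gq h1) (br_skew Hbr gq h1) hg.
rewrite sscaler0 smul0l sadd0l (br_skew Hbr gq fp) smulZr !sscaleA -[RHS]sscale1.
by congr sscale; case: p {fp hf}; case: q {gq hg}; rewrite ?ssignF ?ssignT /=; ring.
Qed.

Hypothesis hh1 : br h h = one.

Lemma br_h_hmul g : inB1 br h g -> br h (smul h g) = g.
Proof.
move=> hg; rewrite (br_leibniz Hbr _ h1 h1) hh1 smul1l hg smul0r sscaler0.
exact: sadd0r.
Qed.

Lemma br_hmul_hmul f g : inB1 br h f -> inB1 br h g ->
  br (smul h f) (smul h g) = smul (spar f) g.
Proof.
move=> + hg; move: f; apply: (inB1_ind h1) => [f f' IHf IHf' | p f fp hf].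
  by rewrite smulDr (br_addl Hbr) IHf IHf' spar_add smulDl.
have hf1 := smul_homog h1 fp.
rewrite (br_leibniz Hbr _ hf1 h1) (br_skew Hbr hf1 h1) (br_h_hmul hf) (br_hmul_B1 _ hg).
rewrite -smulA (smul_odd_self K2 h1) smul0l sscaler0 sadd0r (spar_homog fp) !smulZl.
by congr sscale; case: p {fp hf1}; rewrite ?ssignF ?ssignT /= ?opprK.
Qed.

Lemma br_h_h f : br h (br h f) = zero.
Proof.
apply: boolp.funext => x; rewrite /szero; apply: (selfopp_eq0 K2).
have := br_jacobi Hbr f h1 h1; rewrite hh1 br1l sadd0l ssignT => E.
by rewrite {1}E /sscale mulN1r.
Qed.

Local Notation B1 := (inB1 br h).

Lemma phi_inj P Q : B1 P.1 -> B1 P.2 -> B1 Q.1 -> B1 Q.2 -> phi h P = phi h Q -> P = Q.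
Proof.
case: P Q => [P1 P2] [Q1 Q2] /= hP1 hP2 hQ1 hQ2 PQ.
have P2Q2 : P2 = Q2.
  have := congr1 (br h) PQ; rewrite /phi /= !(br_addr Hbr) hP1 hQ1 !sadd0l.
  by rewrite !br_h_hmul.
congr pair => //; apply: boolp.funext => x.
by apply: (@addIr _ (smul h P2 x)); have := congr1 (fun F => F x) PQ; rewrite /phi /sadd P2Q2.
Qed.

Lemma phi_surj f : exists P, [/\ B1 P.1, B1 P.2 & phi h P = f].
Proof.
have hf : B1 (br h f) by apply: br_h_h.
exists (sadd f (sopp (smul h (br h f))), br h f); split => //=.
  rewrite /inB1 (br_addr Hbr) soppE (br_scaler Hbr) br_h_hmul //.
  by apply: boolp.funext => x; rewrite /sadd /sscale mulN1r addrN.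
by apply: boolp.funext => x; rewrite /phi /sadd /sopp /= addrNK.
Qed.

Lemma phi_linear c P Q :
  phi h (sadd (sscale c P.1) Q.1, sadd (sscale c P.2) Q.2) = sadd (sscale c (phi h P)) (phi h Q).
Proof.
rewrite /phi /= smulDr smulZr.
by apply: boolp.funext => x; rewrite /sadd /sscale mulrDr !addrA; congr (_ + _); rewrite addrAC.
Qed.

Lemma phi_mul P Q : phi h (tmul P Q) = smul (phi h P) (phi h Q).
Proof.
case: P Q => [P1 P2] [Q1 Q2]; rewrite /phi /tmul /= !smulDl !smulDr.
rewrite -[smul P1 (smul h Q2)]smulA (smul_odd_comm _ h1) smulA.
rewrite !smulA -[smul P2 (smul h Q2)]smulA (smul_odd_comm P2 h1) smulA.
rewrite -[smul h (smul h _)]smulA (smul_odd_self K2 h1) smul0l.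
by apply: boolp.funext => x; rewrite /sadd /szero addr0 !addrA; congr (_ + _); rewrite addrAC.
Qed.

Lemma phi_br P Q : B1 P.1 -> B1 P.2 -> B1 Q.1 -> B1 Q.2 ->
  phi h (tbr br P Q) = br (phi h P) (phi h Q).
Proof.
case: P Q => [P1 P2] [Q1 Q2] /= hP1 hP2 hQ1 hQ2.
rewrite /phi /tbr /= !(br_addl Hbr) !(br_addr Hbr).
rewrite (br_B1_hmul _ hP1) (br_hmul_B1 _ hQ1) (br_hmul_hmul hP2 hQ2) smulDr.
by apply: boolp.funext => x; rewrite /sadd; ring.
Qed.

Lemma phi_poisson_iso_odd : phi_poisson_iso br h.
Proof.
split=> [P Q|f|c P Q _ _ _ _||P Q]; [exact: phi_inj | exact: phi_surj | exact: phi_linear | |].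
  by split=> [|P Q _ _ _ _]; [rewrite /phi smul0r sadd0r | exact: phi_mul].
exact: phi_br.
Qed.

End OddElement.

End Bracket.

Section Normalization.
Variables (K : fieldType) (m n : nat).
Local Notation S := (ser K m n).
Local Notation one := (@sone K m n).
Local Notation mon0 := (mon0 m n).
Implicit Types (c w : S).
Hypotheses (K2 : 2%:R != 0 :> K) (Ksqrt : forall x : K, exists r, r * r = x).

Lemma exists_even_inv_sqrt c : homog false c -> c mon0 != 0 ->
  exists w, homog false w /\ smul c (smul w w) = one.
Proof.
move=> c0 cmon0; have [v cv] := exists_smul_inv cmon0.
have v0 := homog_seven (f := v); have v1 := homog_sodd (f := v).
have ce : smul c (seven v) = one.
  rewrite -(seven_id (@homog1 K m n)) -cv -{2}(seven_add_sodd v) smulDr.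
  by rewrite seven_add //; [exact: (smul_homog c0 v0) | exact: (smul_homog c0 v1)].
have emon0 : seven v mon0 != 0.
  apply: contra_eq_neq (congr1 (fun F => F mon0) ce) => e0.
  by rewrite smul_mon0 e0 mulr0 /sone eqxx eq_sym oner_neq0.
have [r re] := Ksqrt (seven v mon0).
have r0 : r != 0 by apply: contraNneq emon0 => r0; rewrite -re r0 mulr0.
have [w ww] := exists_smul_sqrt re r0 K2.
exists (seven w); split; first exact: homog_seven.
by rewrite -(seven_smul_self K2) ww seven_id.
Qed.

End Normalization.

Section OddUnit.
Variables (K : fieldType) (m n : nat).
Local Notation S := (ser K m n).
Local Notation zero := (@szero K m n).
Local Notation one := (@sone K m n).
Local Notation mon0 := (mon0 m n).
Implicit Types (c f g h w : S).
Variable br : S -> S -> S.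
Hypothesis Hbr : is_poisson br.
Hypotheses (K2 : 2%:R != 0 :> K) (K3 : 3%:R != 0 :> K).
Hypothesis Ksqrt : forall x : K, exists r, r * r = x.

(* Jacobi and skew-symmetry give {h,{h,h}} = -2 {h,{h,h}}. *)
Lemma br_odd_brsq h : homog true h -> br h (br h h) = zero.
Proof.
move=> h1; have hh0 : homog false (br h h) := br_even Hbr h1 h1.
have := br_jacobi Hbr h h1 h1; rewrite (br_skew Hbr hh0 h1) ssignT ssignF /= => E.
apply: boolp.funext => x; have := congr1 (fun F => F x) E.
rewrite /sadd /sscale /szero !mulN1r; set y := br h (br h h) x => Ey.
have : y * 3%:R = y - (- y + - y) by ring.
by rewrite -Ey subrr => /eqP; rewrite mulf_eq0 (negbTE K3) orbF => /eqP.
Qed.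

Lemma br_odd_inv_sqrt h c w : homog true h -> homog false c -> homog false w ->
  br h c = zero -> smul c (smul w w) = one -> br h w = zero.
Proof.
move=> h1 c0 w0 Dc cww.
have wwc : smul (smul w w) c = one by rewrite (smulC (smul_homog w0 w0) c0) ssignF sscale1.
have Dww : br h (smul w w) = zero.
  have := br1r Hbr h; rewrite -{1}cww (br_odd_even_mul Hbr _ h1 c0) Dc smul0l sadd0l => cDww.
  by rewrite -[br h _]smul1l -wwc smulA cDww smul0r.
have wDw : smul w (br h w) = zero.
  apply: (sadd_self_eq0 K2); rewrite -Dww (br_odd_even_mul Hbr _ h1 w0).
  by rewrite (smulC (br_even Hbr h1 w0) w0) ssignF sscale1.
by rewrite -[br h w]smul1l -cww !smulA wDw !smul0r.
Qed.

(* As {h,w} = 0 and h h = 0, the Leibniz rule gives {h w, h w} = {h,h} w w. *)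
Lemma exists_odd_br_one h : homog true h -> br h h mon0 != 0 ->
  exists H, homog true H /\ br H H = one.
Proof.
move=> h1 hh_mon0; have c0 : homog false (br h h) := br_even Hbr h1 h1.
have [w [w0 cww]] := exists_even_inv_sqrt K2 Ksqrt c0 hh_mon0.
have Dw := br_odd_inv_sqrt h1 c0 w0 (br_odd_brsq h1) cww.
have hw1 : homog true (smul h w) := smul_homog h1 w0.
exists (smul h w); split => //.
rewrite (br_leibniz Hbr _ hw1 h1) (br_skew Hbr hw1 h1) (br_leibniz Hbr _ h1 h1) Dw smul0r.
rewrite sscaler0 sadd0r (br_skew Hbr hw1 w0) (br_leibniz Hbr _ w0 h1) (br_skew Hbr w0 h1) Dw.
rewrite sscaler0 smul0l sadd0l !smulZr -smulA (smul_odd_self K2 h1) smul0l !sscaler0 sadd0r.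
by rewrite ssignT opprK sscale1 smulA.
Qed.

(* If {f,f} and {g,g} vanish at 0, then {f + g, f + g} has constant term 2 {f,g}(0). *)
Lemma exists_odd_br_one_of_pair f g : homog true f -> homog true g -> br f g mon0 = 1 ->
  exists H, homog true H /\ br H H = one.
Proof.
move=> f1 g1 fg1.
have [ff0|] := eqVneq (br f f mon0) 0; last exact: exists_odd_br_one.
have [gg0|] := eqVneq (br g g mon0) 0; last exact: exists_odd_br_one.
apply: (exists_odd_br_one (homogD f1 g1)).
rewrite (br_addl Hbr) !(br_addr Hbr) (br_skew Hbr g1 f1) /sadd /sscale ssignT opprK mul1r.
by rewrite ff0 gg0 fg1 add0r addr0.
Qed.

End OddUnit.

Section ConstantTerm.
Variables (K : comNzRingType) (m n : nat).
Local Notation mon0 := (mon0 m n).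

Lemma yvar_mon0 i : yvar K (n := n) i mon0 = 0.
Proof.
rewrite /yvar; case: eqP => // /(congr1 (fun x : mon m n => x.1 i)).
by rewrite /= !ffunE eqxx.
Qed.

Lemma thvar_mon0 j : thvar K (m := m) j mon0 = 0.
Proof.
rewrite /thvar; case: eqP => // /(congr1 (fun x : mon m n => j \in x.2)).
by rewrite /= inE set11.
Qed.

Lemma in_AM_mon0 chi (t : ser K m n) : in_AM chi t -> t mon0 = 0.
Proof.
move=> [a [b ->]]; rewrite !big1 ?addr0 // => [j _|i _]; rewrite smul_mon0.
  by rewrite thvar_mon0 mulr0.
by rewrite /sadd /xel /sadd /sconst /sscale /sone eqxx yvar_mon0 !mulr1 addr0 addrN mulr0.
Qed.

End ConstantTerm.

Unset Implicit Arguments.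

Theorem lemma2p2 (R : realType) (m n : nat) (chi : 'I_m -> R[i])
    (br : ser R[i] m n -> ser R[i] m n -> ser R[i] m n)
    (Hbr : is_poisson br) (Hcont : br_continuous br) :
  (forall f g t : ser R[i] m n,
      is_odd f -> is_odd g -> in_AM chi f -> in_AM chi g -> in_AM chi t ->
      br f g = sadd (@sone _ m n) t ->
      exists h : ser R[i] m n, is_odd h /\ br h h = @sone _ m n)
  /\
  (forall h : ser R[i] m n, is_odd h -> br h h = @sone _ m n ->
      phi_poisson_iso br h).
Proof.
have K2 : 2%:R != 0 :> R[i] by rewrite Num.Theory.pnatr_eq0.
have K3 : 3%:R != 0 :> R[i] by rewrite Num.Theory.pnatr_eq0.
have Ksqrt (x : R[i]) : exists r, r * r = x by exists (sqrtc x); rewrite -expr2 sqr_sqrtc.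
split=> [f g t f1 g1 _ _ tAM fg1 | h h1 hh1]; last exact: phi_poisson_iso_odd.
apply: (exists_odd_br_one_of_pair Hbr K2 K3 Ksqrt f1 g1).
by rewrite fg1 /sadd (in_AM_mon0 tAM) /sone eqxx addr0.
Qed.
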